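(* Let $A$, $B$, $C$ be commutative associative unital algebras over $\mathbb{C}$ or $\mathbb{R}$. If $\mathbf{g}\colon A\to B$ is an $m$-homomorphism and $\mathbf{f}\colon B\to C$ is an $n$-homomorphism, then $\mathbf{f}\circ\mathbf{g}\colon A\to C$ is an $nm$-homomorphism.
   Context: For a linear map $\mathbf{f}\colon A\to B$, its characteristic function is the formal power series $R(\mathbf{f},a,z)=\exp\bigl(\mathbf{f}(\ln(1+az))\bigr)\in B[[z]]$, where $\ln(1+az)=\sum_{k\ge1}(-1)^{k-1}a^kz^k/k$ and $\mathbf{f}$ is applied coefficientwise. For an integer $n\ge0$, a linear map $\mathbf{f}$ is an $n$-homomorphism if $\mathbf{f}(1)=n$ and $R(\mathbf{f},a,z)$ is a polynomial in $z$ of degree at most $n$ for every $a$ in its domain. *)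

From HB Require Import structures.
From mathcomp Require Import all_boot all_order all_algebra.
From mathcomp Require Import reals.
From mathcomp.real_closed Require Import complex.
Set Implicit Arguments. Unset Strict Implicit. Unset Printing Implicit Defensive.
Import Order.TTheory GRing.Theory Num.Theory.
Local Open Scope ring_scope.

(* Formal power series over a ring B are represented by their coefficient
   sequences  nat -> B  (coefficient of z^k at index k). *)

Definition mulps (B : pzRingType) (s t : nat -> B) : nat -> B :=
  fun k => \sum_(i < k.+1) s i * t (k - i)%N.

Fixpoint powps (B : pzRingType) (s : nat -> B) (j : nat) : nat -> B :=
  match j with
  | 0 => fun k => if k == 0%N then 1 else 0
  | j'.+1 => mulps s (powps s j')
  end.

(* ln(1 + a z) = sum_{k>=1} (-1)^(k-1) a^k z^k / k *)
Definition lnps (K : fieldType) (A : comAlgType K) (a : A) : nat -> A :=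
  fun k => if k == 0%N then 0
           else (((-1) ^+ k.-1 / k%:R : K) *: a ^+ k).

(* exp(s) = sum_j s^j / j!  for a series s with zero constant term; the
   coefficient of z^k only receives contributions from j <= k. *)
Definition expps (K : fieldType) (B : comAlgType K) (s : nat -> B) : nat -> B :=
  fun k => \sum_(j < k.+1) ((j`!)%:R : K)^-1 *: powps s j k.

Definition charfun (K : fieldType) (A B : comAlgType K) (f : A -> B) (a : A)
  : nat -> B := expps (fun k => f (lnps a k)).

Definition nhom (K : fieldType) (A B : comAlgType K) (n : nat) (f : A -> B)
  : Prop :=
  linear f /\ f 1 = n%:R /\
  forall (a : A) (k : nat), (n < k)%N -> charfun f a k = 0.

From HB Require Import structures.
From mathcomp Require Import all_boot all_order all_algebra.
From mathcomp Require Import reals.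
From mathcomp.real_closed Require Import complex.
From mathcomp Require Import zify.
Import Order.TTheory GRing.Theory Num.Theory.
Local Open Scope ring_scope.

(* Write [R(g, a, z) = 1 + z q(z)] with [size q <= m].  As [ln] inverts [exp]
   (checked modulo [z^M] by differentiating [ln (exp z)]), [g (ln (1 + a z))]
   is [ln (1 + z q(z))], hence [R(f o g, a, z) = exp F(z, z)] for
   [F(T, s) = sum_i L_i T^i f (q(s)^i)], [L_i] the coefficients of [ln (1 + z)].
   For each scalar [s], [exp F(T, s) = R(f, q(s), T)] has degree at most [n] in
   [T], so in characteristic 0 the coefficient [E_i(s)] of [T^i] in [exp F]
   vanishes identically for [i > n]; moreover [deg E_i <= i (m - 1)].  Thus
   [exp F(z, z) = sum_(i <= n) z^i E_i(z)] has degree at most [n m]. *)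

Definition tseries {S : comNzRingType} (c : nat -> S) (M : nat) (x : S) : S :=
  \sum_(j < M) c j * x ^+ j.

Lemma eq_tseries {S : comNzRingType} {c c' : nat -> S} M x :
  c =1 c' -> tseries c M x = tseries c' M x.
Proof. by move=> eq_c; apply: eq_bigr => j _; rewrite eq_c. Qed.

Lemma rmorph_tseries (S S' : comNzRingType) (phi : {rmorphism S -> S'}) c M x :
  phi (tseries c M x) = tseries (phi \o c) M (phi x).
Proof.
by rewrite rmorph_sum; apply: eq_bigr => j _; rewrite rmorphM rmorphXn.
Qed.

Lemma horner_tseries (S : comNzRingType) (c : nat -> S) M (Y : {poly S}) x :
  (tseries (polyC \o c) M Y).[x] = tseries c M Y.[x].
Proof.
rewrite -horner_evalE rmorph_tseries /= horner_evalE.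
by apply: eq_tseries => j /=; rewrite horner_evalE hornerC.
Qed.

Definition eqmodX {S : nzSemiRingType} (M : nat) (p q : {poly S}) :=
  forall i, (i < M)%N -> p`_i = q`_i.

Definition trunc {S : nzSemiRingType} (M : nat) (s : nat -> S) : {poly S} :=
  \poly_(i < M) s i.

Section TruncatedPolynomials.
Context {S : comNzRingType}.
Implicit Types (p q r G : {poly S}) (s : nat -> S).

Lemma eqmodX_refl {M p} : eqmodX M p p. Proof. by []. Qed.

Lemma eqmodX_sym {M p q} : eqmodX M p q -> eqmodX M q p.
Proof. by move=> epq i /epq. Qed.

Lemma eqmodX_trans {M p q r} : eqmodX M p q -> eqmodX M q r -> eqmodX M p r.
Proof. by move=> epq eqr i ltiM; rewrite epq ?eqr. Qed.

Lemma eqmodXD {M p p' q q'} :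
  eqmodX M p p' -> eqmodX M q q' -> eqmodX M (p + q) (p' + q').
Proof. by move=> ep eq i ltiM; rewrite !coefD ep ?eq. Qed.

Lemma eqmodXM {M p p' q q'} :
  eqmodX M p p' -> eqmodX M q q' -> eqmodX M (p * q) (p' * q').
Proof.
move=> ep eq i ltiM; rewrite !coefM; apply: eq_bigr => -[j ltji] _ /=.
by rewrite ep ?eq //; lia.
Qed.

Lemma eqmodXX {M p p'} k : eqmodX M p p' -> eqmodX M (p ^+ k) (p' ^+ k).
Proof.
by move=> ep; elim: k => [|k IHk]; rewrite ?exprS //; apply: eqmodXM.
Qed.

Lemma eqmodX_tseries c M {N p q} :
  eqmodX N p q -> eqmodX N (tseries c M p) (tseries c M q).
Proof.
move=> epq i ltiN; rewrite !coef_sum; apply: eq_bigr => j _.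
exact: (eqmodXM eqmodX_refl (eqmodXX j epq) i ltiN).
Qed.

Lemma eqmodX_map {S' : comNzRingType} (phi : {additive S -> S'}) {M p q} :
  eqmodX M p q -> eqmodX M (map_poly phi p) (map_poly phi q).
Proof. by move=> epq i /epq; rewrite !coef_map => ->. Qed.

Lemma eqmodX0_divX M p : eqmodX M p 0 -> p = drop_poly M p * 'X^M.
Proof.
move=> p0; rewrite -{1}(poly_take_drop M p) addrC -[RHS]addr0; congr (_ + _).
apply/polyP => i; rewrite coef_take_poly coef0.
by case: ifP => // /p0 ->; rewrite coef0.
Qed.

Lemma eqmodX0_expr {p} k : p`_0 = 0 -> eqmodX k (p ^+ k) 0.
Proof.
move=> p0 i ltik; rewrite (@eqmodX0_divX 1 p); last by case=> // _; rewrite p0 coef0.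
by rewrite exprMn -exprM mul1n coefMXn ltik coef0.
Qed.

Lemma eqmodX_comp {M p q G} :
  G`_0 = 0 -> eqmodX M p q -> eqmodX M (p \Po G) (q \Po G).
Proof.
move=> G0 epq i ltiM; apply/eqP; rewrite -subr_eq0 -coefB -raddfB /=.
have /eqmodX0_divX -> : eqmodX M (p - q) 0.
  by move=> j ltjM; rewrite coefB epq ?subrr ?coef0.
rewrite comp_polyM rmorphXn /= comp_polyX.
by rewrite (eqmodXM eqmodX_refl (eqmodX0_expr M G0)) // mulr0 coef0.
Qed.

Lemma coef_powps {M} s j {k} : (k < M)%N -> powps s j k = (trunc M s ^+ j)`_k.
Proof.
elim: j k => [|j IHj] k ltkM /=; first by rewrite expr0 coef1; case: (k == 0%N).
rewrite exprS coefM; apply: eq_bigr => -[i ltik] _ /=.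
by rewrite coef_poly IHj; [have -> : (i < M)%N by lia | lia].
Qed.

Lemma map_poly_trunc {S' : comNzRingType} (phi : {additive S -> S'}) M s :
  map_poly phi (trunc M s) = trunc M (phi \o s).
Proof.
by apply/polyP => i; rewrite coef_map !coef_poly; case: ifP; rewrite ?raddf0.
Qed.

End TruncatedPolynomials.

Lemma horner_map_natr {B C : nzRingType} (f : {additive B -> C})
    (p : {poly B}) (k : nat) :
  (map_poly f p).[k%:R] = f p.[k%:R].
Proof.
rewrite (horner_coef_wide _ (size_poly _ _)) horner_coef raddf_sum.
by apply: eq_bigr => i _; rewrite coef_map -!natrX !mulr_natr raddfMn.
Qed.

Section WeightedDegree.
Context {C : comNzRingType}.
Variable m : nat.

(* For [m >= 1] this is [i (m - 1) + 1], the size of a polynomial of degree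
   [i (m - 1)]; for [m = 0] it vanishes as soon as [i >= 1]. *)
Definition wdeg_bound i := ((i * m).+1 - i)%N.

Definition wdeg_le (P : {poly {poly C}}) :=
  forall i, (size (P`_i)%R <= wdeg_bound i)%N.

Lemma wdeg_boundD j k : (wdeg_bound j + wdeg_bound k <= (wdeg_bound (j + k)).+1)%N.
Proof.
rewrite /wdeg_bound mulnDl.
have [->|m_gt0] := posnP m; first by rewrite !muln0; lia.
by have := leq_pmulr j m_gt0; have := leq_pmulr k m_gt0; lia.
Qed.

Lemma size_mul_wdeg_bound {j k} {p r : {poly C}} :
  (size p <= wdeg_bound j)%N -> (size r <= wdeg_bound k)%N ->
  (size (p * r)%R <= wdeg_bound (j + k))%N.
Proof.
move=> szp szr; apply: leq_trans (size_polyMleq p r) _.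
by have := wdeg_boundD j k; lia.
Qed.

Lemma size_exp_wdeg_bound {p : {poly C}} i :
  (size p <= m)%N -> (size (p ^+ i) <= wdeg_bound i)%N.
Proof.
move=> szp; elim: i => [|i IHi]; first by rewrite expr0 size_poly1.
rewrite exprS -add1n; apply: size_mul_wdeg_bound IHi.
by rewrite /wdeg_bound mul1n subn1.
Qed.

Lemma wdeg_leD P Q : wdeg_le P -> wdeg_le Q -> wdeg_le (P + Q).
Proof.
by move=> wP wQ i; rewrite coefD (leq_trans (size_polyD _ _)) // geq_max wP wQ.
Qed.

Lemma wdeg_leM P Q : wdeg_le P -> wdeg_le Q -> wdeg_le (P * Q).
Proof.
move=> wP wQ i; rewrite coefM.
apply: (big_ind (fun r : {poly C} => size r <= wdeg_bound i)%N).
- by rewrite size_poly0.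
- by move=> r r' szr szr'; rewrite (leq_trans (size_polyD _ _)) // geq_max szr szr'.
- move=> -[j ltji] _ /=; apply: leq_trans (size_mul_wdeg_bound (wP j) (wQ _)) _.
  by rewrite subnKC.
Qed.

Lemma wdeg_le_polyC (c : {poly C}) : (size c <= 1)%N -> wdeg_le c%:P.
Proof.
by move=> szc [|i]; rewrite coefC //= size_poly0.
Qed.

Lemma wdeg_le_tseries c M Y :
  (forall j, wdeg_le (c j)) -> wdeg_le Y -> wdeg_le (tseries c M Y).
Proof.
move=> wc wY; apply: (big_ind wdeg_le) => [i|P Q|j _].
- by rewrite coef0 size_poly0.
- exact: wdeg_leD.
- apply: wdeg_leM => //; elim: (nat_of_ord j) => [|k IHk].
    by rewrite expr0 -polyC1; apply/wdeg_le_polyC/size_polyC_leq1.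
  by rewrite exprS; apply: wdeg_leM.
Qed.

Lemma coef_hornerX_eq0 {n N} {E : {poly {poly C}}} :
  wdeg_le E -> (forall i, (n < i <= N)%N -> E`_i = 0) -> (n * m < N)%N ->
  (E.['X])`_N = 0.
Proof.
move=> wE E0 ltnmN; rewrite horner_coef coef_sum big1 // => -[i _] _ /=.
rewrite coefMXn; case: ltnP => // leiN.
have [ltni|leni] := ltnP n i; first by rewrite E0 ?ltni ?coef0.
apply: nth_default; apply: leq_trans (wE i) _.
by have := leq_mul leni (leqnn m); rewrite /wdeg_bound; lia.
Qed.

End WeightedDegree.

Section CharZero.
Variable K : fieldType.
Hypothesis K0 : [pchar K] =i pred0.

Lemma natrS_neq0 n : n.+1%:R != 0 :> K.
Proof. by move/pcharf0P: K0 => ->. Qed.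

Lemma mulrSnI n : injective (fun x : K => x *+ n.+1).
Proof.
move=> x y /eqP; rewrite -subr_eq0 -mulrnBl -mulr_natr mulf_eq0 subr_eq0.
by rewrite (negbTE (natrS_neq0 n)) orbF => /eqP.
Qed.

Definition expc (j : nat) : K := (j`!%:R)^-1.

(* At [i = 0] this is [1 / 0 = 0], the constant term of [ln (1 + z)]. *)
Definition logc (i : nat) : K := (-1) ^+ i.-1 / i%:R.

Lemma expcS j : expc j.+1 *+ j.+1 = expc j.
Proof.
rewrite /expc -[_ *+ j.+1]mulr_natr factS natrM invfM mulrAC mulVf ?mul1r //.
exact: natrS_neq0.
Qed.

Lemma logcS i : logc i.+1 *+ i.+1 = (-1) ^+ i.
Proof. by rewrite /logc -[_ *+ i.+1]mulr_natr divfK ?natrS_neq0. Qed.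

Lemma lnpsE (A : comAlgType K) (a : A) k : lnps a k = logc k *: a ^+ k.
Proof. by case: k => [|k]; rewrite /lnps /logc ?invr0 ?mulr0 ?scale0r. Qed.

Lemma charfun_trunc {A B : comAlgType K} (h : A -> B) (a : A) {M k} :
  h 0 = 0 -> (k < M)%N ->
  charfun h a k =
    (tseries (polyC \o in_alg B \o expc) M (trunc M (h \o lnps a)))`_k.
Proof.
move=> h0 ltkM; set s := trunc M _.
have s0 : s`_0 = 0 by rewrite coef_poly /= /lnps /= h0; case: ifP.
rewrite /charfun /expps /tseries coef_sum.
rewrite (big_ord_widen M (fun j => expc j *: powps _ j k)) // big_mkcond.
apply: eq_bigr => -[j ltjM] _ /=; rewrite coefCM (coef_powps _ _ ltkM) mulr_algl.
case: ifP => // /negbT; rewrite -leqNgt => ltkj.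
by rewrite (eqmodX0_expr j s0) ?coef0 ?scaler0.
Qed.

Lemma eqmodX_deriv {M} {p q : {poly K}} :
  p`_0 = q`_0 -> eqmodX M p^`() q^`() -> eqmodX M.+1 p q.
Proof.
move=> pq0 epq [|i] ltiM //; have := epq i ltiM.
by rewrite !coef_deriv => /mulrSnI.
Qed.

Lemma log_exp_X M :
  eqmodX M (tseries (polyC \o logc) M (tseries (polyC \o expc) M 'X - 1)) 'X.
Proof.
case: M => [|M] //; set e := tseries _ _ 'X; set y := e - 1.
have eE : e = \poly_(i < M.+1) expc i.
  by rewrite poly_def; apply: eq_bigr => j _; rewrite mul_polyC.
have y0 : y`_0 = 0 by rewrite coefB eE coef_poly coef1 /expc fact0 invr1 subrr.
have de : eqmodX M e^`() e.
  by move=> i ltiM; rewrite coef_deriv eE !coef_poly ltnS ltiM ltnW // expcS.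
have geom : e * \sum_(i < M) (- y) ^+ i = 1 - (- y) ^+ M.
  rewrite -[1 in RHS](expr1n _ M) subrXX opprK addrC subrK.
  by congr (_ * _); apply: eq_bigr => i _; rewrite expr1n mul1r.
have dlog : (tseries (polyC \o logc) M.+1 y)^`() = y^`() * \sum_(i < M) (- y) ^+ i.
  rewrite raddf_sum big_ord_recl /= /logc invr0 mulr0 mul0r deriv0 add0r mulr_sumr.
  apply: eq_bigr => i _; rewrite derivM derivC mul0r add0r deriv_exp /=.
  by rewrite mulrnAr -mulrnAl -polyCMn logcS rmorphXn rmorphN1 add0n mulrCA -exprNn.
apply: (eqmodX_deriv _ _).
  rewrite coefX /tseries coef_sum big1 // => -[[|j] _] _ /=; rewrite coefCM.
    by rewrite /logc invr0 mulr0 mul0r.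
  by rewrite (eqmodX0_expr j.+1 y0) // coef0 mulr0.
rewrite dlog derivX derivB derivC subr0.
apply: eqmodX_trans (eqmodXM de eqmodX_refl) _; rewrite geom => i ltiM.
have y0N : (- y)`_0 = 0 by rewrite coefN y0 oppr0.
by rewrite coefB (eqmodX0_expr M y0N) // coef0 subr0.
Qed.

Lemma log_exp {S : comNzRingType} (iota : {rmorphism K -> S}) {M}
    {G : {poly S}} :
  G`_0 = 0 ->
  eqmodX M (tseries (polyC \o iota \o logc) M
              (tseries (polyC \o iota \o expc) M G - 1)) G.
Proof.
move=> G0; have := eqmodX_comp G0 (eqmodX_map iota (log_exp_X M)).
rewrite map_polyX comp_polyX !rmorph_tseries !rmorphB !rmorph1 !rmorph_tseries /=.
rewrite map_polyX comp_polyX.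
have coefE (c : nat -> K) :
    comp_poly G \o (map_poly iota \o (polyC \o c)) =1 polyC \o iota \o c.
  by move=> j /=; rewrite map_polyC comp_polyC.
by rewrite !(eq_tseries _ _ (coefE _)).
Qed.

Lemma poly_natr_eq0 (C : comAlgType K) (p : {poly C}) :
  (forall k : nat, p.[k%:R] = 0) -> p = 0.
Proof.
move=> pk0; suff vanish d (r : {poly C}) c : (size r <= d)%N ->
    (forall k, (c <= k)%N -> r.[k%:R] = 0) -> r = 0.
  exact: (vanish _ p 0%N (leqnn _) (fun k _ => pk0 k)).
elim: d r c => [|d IHd] r c szr rk0; first by apply/eqP; rewrite -size_poly_eq0 -leqn0.
have /factor_theorem [r' def_r] : root r c%:R by apply/eqP; apply: rk0.
rewrite {}def_r in szr rk0 *.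
have [-> | nz_r'] := eqVneq r' 0; first by rewrite mul0r.
suff -> : r' = 0 by rewrite mul0r.
apply: (IHd r' c.+1) => [|k ltck].
  by move: szr; rewrite size_Mmonic ?monicXsubC // size_XsubC addn2.
have := rk0 k (ltnW ltck); rewrite hornerM hornerXsubC -natrB ?(ltnW ltck) //.
rewrite mulr_natr -scaler_nat => /(congr1 ( *:%R ((k - c)%:R)^-1)).
by rewrite scalerK ?scaler0 // -(subnSK ltck) natrS_neq0.
Qed.

Definition charfun_bounded {A B : comAlgType K} (n : nat) (f : A -> B) :=
  forall a k, (n < k)%N -> charfun f a k = 0.

Lemma trunc_charfun {A B : comAlgType K} {g : A -> B} {m} a {M} :
  charfun_bounded m g -> (m < M)%N ->
  trunc M (charfun g a) = 1 + 'X * \poly_(i < m) charfun g a i.+1.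
Proof.
move=> gm ltmM; apply/polyP => -[|i]; rewrite coefD coef1 coefXM !coef_poly /=.
  rewrite ifT ?addr0 ?(leq_ltn_trans _ ltmM) //.
  by rewrite /charfun /expps big_ord1 /= fact0 invr1 scale1r.
rewrite add0r; case: (ltnP i m) => [ltim | leim]; first by rewrite ifT //; lia.
by rewrite gm //; case: ifP.
Qed.

Lemma log_charfun {A B : comAlgType K} {g : A -> B} {m} a {M} :
  g 0 = 0 -> charfun_bounded m g -> (m < M)%N ->
  eqmodX M (trunc M (g \o lnps a))
    (tseries (polyC \o in_alg B \o logc) M ('X * \poly_(i < m) charfun g a i.+1)).
Proof.
move=> g0 gm ltmM; set G := trunc M _.
have G0 : G`_0 = 0 by rewrite coef_poly /= /lnps /= g0; case: ifP.
apply: eqmodX_sym (eqmodX_trans _ (log_exp _ G0)); apply: eqmodX_tseries.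
rewrite -(addKr 1 ('X * _)) -(trunc_charfun a gm ltmM) addrC.
apply: eqmodXD eqmodX_refl => k ltkM.
by rewrite coef_poly ltkM (charfun_trunc _ _ g0 ltkM).
Qed.

Section BivariateLog.
Context {B C : comAlgType K} (f : {linear B -> C}) (q : {poly B}) (M : nat).

(* [F(T, s)] truncated at [T^M], as a polynomial in [T] over [C[s]]:
   [T := s] gives [f (ln (1 + s q(s)))] and [s := k] gives [f (ln (1 + T q(k)))]. *)
Definition log_bivar : {poly {poly C}} :=
  \poly_(i < M) map_poly f (((logc i)%:A)%:P * q ^+ i).

Definition exp_bivar : {poly {poly C}} :=
  tseries (polyC \o (polyC \o in_alg C \o expc)) M log_bivar.

Lemma map_log_bivar :
  map_poly f (tseries (polyC \o in_alg B \o logc) M ('X * q)) = log_bivar.['X].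
Proof.
rewrite (horner_coef_wide _ (size_poly _ _)) raddf_sum.
apply: eq_bigr => -[i ltiM] _ /=; rewrite coef_poly ltiM exprMn mulrCA.
apply/polyP => k; rewrite coef_map coefMXn coefXnM.
by case: ifP; rewrite ?raddf0 ?coef_map.
Qed.

Lemma horner_exp_bivar :
  tseries (polyC \o in_alg C \o expc) M log_bivar.['X] = exp_bivar.['X].
Proof. by rewrite horner_tseries. Qed.

Lemma horner_log_bivar (k : nat) :
  map_poly (horner_eval k%:R) log_bivar = trunc M (f \o lnps q.[k%:R]).
Proof.
apply/polyP => i; rewrite coef_map !coef_poly /= horner_evalE.
case: ifP => _; last by rewrite horner0.
by rewrite horner_map_natr hornerCM horner_exp lnpsE /= mulr_algl linearZ.
Qed.

Lemma exp_bivar_eq0 {n i} :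
  charfun_bounded n f -> (n < i < M)%N -> exp_bivar`_i = 0.
Proof.
move=> fn /andP[ltni ltiM]; apply: poly_natr_eq0 => k.
rewrite -horner_evalE -coef_map rmorph_tseries /= horner_log_bivar.
rewrite (eq_tseries _ _ (c' := polyC \o in_alg C \o expc)) => [|j].
  by rewrite -charfun_trunc ?raddf0 ?fn.
by rewrite /= map_polyC /= horner_evalE hornerC.
Qed.

Lemma wdeg_le_exp_bivar m : (size q <= m)%N -> wdeg_le m exp_bivar.
Proof.
move=> szq; apply: wdeg_le_tseries => [j|i].
  exact/wdeg_le_polyC/size_polyC_leq1.
rewrite coef_poly; case: ifP => _; last by rewrite size_poly0.
apply: leq_trans (size_poly _ _) _; apply: leq_trans (size_polyMleq _ _) _.
have := size_polyC_leq1 ((logc i)%:A : B); have := size_exp_wdeg_bound m i szq.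
by move: (size _) (size _) (wdeg_bound m i) => x y z; lia.
Qed.

End BivariateLog.

Lemma charfun_bounded_comp {A B C : comAlgType K}
    (g : {linear A -> B}) (f : {linear B -> C}) {m n} :
  charfun_bounded m g -> charfun_bounded n f -> charfun_bounded (n * m) (f \o g).
Proof.
move=> gm fn a N ltnmN; set M := (N + m).+1.
have ltNM : (N < M)%N by rewrite /M; lia.
have ltmM : (m < M)%N by rewrite /M; lia.
have logg := log_charfun a (raddf0 g) gm ltmM.
rewrite (charfun_trunc _ _ _ ltNM) /= ?raddf0 //.
have -> : trunc M ((f \o g) \o lnps a) = map_poly f (trunc M (g \o lnps a)).
  by rewrite map_poly_trunc.
rewrite (eqmodX_tseries _ M (eqmodX_map f logg) N ltNM).
rewrite map_log_bivar horner_exp_bivar.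
apply: (coef_hornerX_eq0 _ (wdeg_le_exp_bivar f _ M _ (size_poly _ _)) _ ltnmN) => i.
by case/andP=> ltni leiN; apply: (exp_bivar_eq0 f _ M fn); rewrite ltni /M; lia.
Qed.

End CharZero.

Lemma nhom_comp (K : fieldType) (A B C : comAlgType K) (m n : nat)
    (g : A -> B) (f : B -> C) :
  [pchar K] =i pred0 -> nhom m g -> nhom n f -> nhom (n * m) (f \o g).
Proof.
move=> K0 [glin [g1 gm]] [flin [f1 fn]].
pose lg := HB.pack_for {linear A -> B} g (GRing.isLinear.Build K A B *:%R g glin).
pose lf := HB.pack_for {linear B -> C} f (GRing.isLinear.Build K B C *:%R f flin).
split; [|split].
- by move=> c u v /=; rewrite glin flin.
- have fMn : f (1 *+ m) = f 1 *+ m := raddfMn lf m 1.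
  by rewrite /= g1 fMn f1 natrM mulr_natr.
- exact: (@charfun_bounded_comp K K0 A B C lg lf).
Qed.

Theorem mainTheorem3 (R : realType) :
  (forall (A B C : comAlgType R) (m n : nat) (g : A -> B) (f : B -> C),
      nhom m g -> nhom n f -> nhom (n * m) (f \o g)) /\
  (forall (A B C : comAlgType R[i]) (m n : nat) (g : A -> B) (f : B -> C),
      nhom m g -> nhom n f -> nhom (n * m) (f \o g)).
Proof.
by split=> A B C m n g f; apply: nhom_comp; apply: pchar_num.
Qed.
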